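(* Let $(X,d)$ be a non-empty complete metric space and let $\alpha_{1},\alpha_{2}:X\to X$ be injective contractions with ratios $c_{1},c_{2}\in\,]0,1[$, i.e. $d(\alpha_{i}(x),\alpha_{i}(y))\leq c_{i}\,d(x,y)$ for all $x,y\in X$. Suppose that $\alpha_{1}$ and $\alpha_{2}$ have distinct fixed points and that $c_{1}+c_{2}\leq 1$. Then the semigroup generated by $\alpha_{1}$ and $\alpha_{2}$ under composition is free of rank $2$.
   Context: By Banach's fixed point theorem each contraction has a unique fixed point. A semigroup generated by two elements is free of rank $2$ if distinct finite nonempty words in the two generators give distinct elements. *)

From Stdlib Require Import Reals List.
Open Scope R_scope.

Definition is_metric {X : Type} (d : X -> X -> R) : Prop :=
  (forall x y, 0 <= d x y) /\
  (forall x y, d x y = 0 <-> x = y) /\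
  (forall x y, d x y = d y x) /\
  (forall x y z, d x z <= d x y + d y z).

Definition cauchy_seq {X : Type} (d : X -> X -> R) (u : nat -> X) : Prop :=
  forall eps, 0 < eps -> exists N, forall m n, (N <= m)%nat -> (N <= n)%nat ->
    d (u m) (u n) < eps.

Definition converges_to {X : Type} (d : X -> X -> R) (u : nat -> X) (l : X) : Prop :=
  forall eps, 0 < eps -> exists N, forall n, (N <= n)%nat -> d (u n) l < eps.

Definition complete_metric {X : Type} (d : X -> X -> R) : Prop :=
  forall u : nat -> X, cauchy_seq d u -> exists l, converges_to d u l.

Definition contraction_with {X : Type} (d : X -> X -> R) (c : R) (a : X -> X) : Prop :=
  forall x y, d (a x) (a y) <= c * d x y.

Definition injective_map {X : Type} (f : X -> X) : Prop :=
  forall x y, f x = f y -> x = y.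

(* Evaluation of a word over the alphabet {true, false} in the semigroup
   generated by a1 (letter true) and a2 (letter false) under composition:
   [b1; ...; bn] |-> alpha_b1 o ... o alpha_bn. *)
Fixpoint word_eval {X : Type} (a1 a2 : X -> X) (w : list bool) : X -> X :=
  match w with
  | nil => fun x => x
  | b :: w' => fun x => (if b then a1 else a2) (word_eval a1 a2 w' x)
  end.

Definition free_semigroup2 {X : Type} (a1 a2 : X -> X) : Prop :=
  forall w1 w2 : list bool, w1 <> nil -> w2 <> nil -> w1 <> w2 ->
    word_eval a1 a2 w1 <> word_eval a1 a2 w2.

(* Cancelling the longest common prefix (the generators are injective), a relation
   between two distinct words becomes either "a nonempty word is the identity",
   impossible since that word is a contraction and p1 <> p2, or
   alpha1 o F = alpha2 o G.  In the second case let q be the fixed point of this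
   contraction and S the finite set of the points w(q), w a suffix of F or G.
   Every point of S is alpha_i(y) for some y in S, since q = alpha1(F q) = alpha2(G q).
   If the diameter M of S were positive, induction on the length of w gives
   d(w(q), y) < M for all y in S: points with the same first letter are contracted,
   and points alpha_i(z), alpha_j(y) with i <> j are compared through
   q = alpha_i(.) = alpha_j(.), giving less than c_i M + c_j M <= M.  Hence S is a
   single point, so q is a common fixed point of alpha1 and alpha2: q = p1 = p2. *)

From Stdlib Require Import Reals List Lra Psatz.
Open Scope R_scope.

Section Metric.

Context {X : Type} {d : X -> X -> R} (hd : is_metric d).

Lemma dist_ge0 x y : 0 <= d x y.
Proof. apply hd. Qed.

Lemma dist_eq0 x y : d x y = 0 <-> x = y.
Proof. apply hd. Qed.

Lemma dist_sym x y : d x y = d y x.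
Proof. apply hd. Qed.

Lemma dist_triangle x y z : d x z <= d x y + d y z.
Proof. apply hd. Qed.

Lemma contraction_with_le (c c' : R) (T : X -> X) :
  c <= c' -> contraction_with d c T -> contraction_with d c' T.
Proof.
  intros hc hT x y. pose proof (hT x y). pose proof (dist_ge0 x y). nra.
Qed.

Lemma contraction_comp {c c' : R} {T U : X -> X} : 0 <= c ->
  contraction_with d c T -> contraction_with d c' U ->
  contraction_with d (c * c') (fun x => T (U x)).
Proof.
  intros hc hT hU x y. rewrite Rmult_assoc.
  eapply Rle_trans; [apply hT|]. apply Rmult_le_compat_l; [exact hc|apply hU].
Qed.

Lemma contraction_fixed_point_unique {c : R} {T : X -> X} :
  c < 1 -> contraction_with d c T -> forall p q, T p = p -> T q = q -> p = q.
Proof.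
  intros hc hT p q hp hq. apply dist_eq0.
  pose proof (hT p q) as h. rewrite hp, hq in h. pose proof (dist_ge0 p q). nra.
Qed.

Section Banach.

Context {k : R} {T : X -> X} (hk : 0 <= k < 1) (hT : contraction_with d k T).

Lemma contraction_dist_le_displacements x y :
  d x y * (1 - k) <= d x (T x) + d y (T y).
Proof.
  pose proof (dist_triangle x (T x) y). pose proof (dist_triangle (T x) (T y) y).
  pose proof (hT x y). rewrite (dist_sym (T y) y) in *. lra.
Qed.

Lemma iter_displacement x0 n :
  d (Nat.iter n T x0) (T (Nat.iter n T x0)) <= k ^ n * d x0 (T x0).
Proof.
  induction n as [|n IH]; simpl; [lra|].
  eapply Rle_trans; [apply hT|]. rewrite Rmult_assoc. apply Rmult_le_compat_l; lra.
Qed.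

Lemma iter_cauchy x0 : cauchy_seq d (fun n => Nat.iter n T x0).
Proof.
  intros eps heps. remember (d x0 (T x0)) as d0 eqn:def_d0.
  assert (hd0 : 0 <= d0) by (subst; apply dist_ge0).
  assert (hdelta : 0 < eps * (1 - k) / (2 * (d0 + 1))).
  { apply Rdiv_lt_0_compat; nra. }
  destruct (pow_lt_1_zero k ltac:(rewrite Rabs_pos_eq; lra) _ hdelta) as [N hN].
  exists N. intros m n hm hn.
  assert (small : forall i, (N <= i)%nat -> k ^ i * (2 * (d0 + 1)) < eps * (1 - k)).
  { intros i hi. specialize (hN i hi). rewrite Rabs_pos_eq in hN by (apply pow_le; lra).
    apply Rmult_lt_compat_r with (r := 2 * (d0 + 1)) in hN; [|lra].
    unfold Rdiv in hN. rewrite Rmult_assoc, Rinv_l in hN by lra. lra. }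
  pose proof (small m hm). pose proof (small n hn).
  pose proof (pow_le k m (proj1 hk)). pose proof (pow_le k n (proj1 hk)).
  pose proof (contraction_dist_le_displacements (Nat.iter m T x0) (Nat.iter n T x0)).
  pose proof (iter_displacement x0 m). pose proof (iter_displacement x0 n).
  rewrite <- def_d0 in *. apply Rmult_lt_reg_r with (1 - k); nra.
Qed.

Lemma iter_limit_fixed x0 l :
  converges_to d (fun n => Nat.iter n T x0) l -> T l = l.
Proof.
  intros hl. apply dist_eq0, Rle_antisym; [|apply dist_ge0].
  apply Rle_plus_epsilon. intros eps heps.
  destruct (hl (eps / 2) ltac:(lra)) as [N hN].
  pose proof (hN N (le_n N)). pose proof (hN (S N) (le_S _ _ (le_n N))).
  simpl in *. pose proof (dist_triangle (T l) (T (Nat.iter N T x0)) l).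
  pose proof (hT l (Nat.iter N T x0)). rewrite (dist_sym l) in *.
  pose proof (dist_ge0 (Nat.iter N T x0) l). nra.
Qed.

Theorem banach_fixed_point : complete_metric d -> inhabited X -> exists p, T p = p.
Proof.
  intros hcomplete [x0]. destruct (hcomplete _ (iter_cauchy x0)) as [l hl].
  exists l. exact (iter_limit_fixed x0 l hl).
Qed.

End Banach.

End Metric.

Section Words.

Context {X : Type} (a1 a2 : X -> X).

Definition letter (b : bool) : X -> X := if b then a1 else a2.

Hypotheses (hinj1 : injective_map a1) (hinj2 : injective_map a2)
  (hnot_id : forall b w, ~ (forall x, word_eval a1 a2 (b :: w) x = x))
  (hno_cross : forall f g, ~ (forall x, a1 (word_eval a1 a2 f x) = a2 (word_eval a1 a2 g x))).

Lemma word_eval_ext_inj w1 w2 :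
  (forall x, word_eval a1 a2 w1 x = word_eval a1 a2 w2 x) -> w1 = w2.
Proof.
  revert w2. induction w1 as [|b1 w1 IH]; intros [|b2 w2] heq.
  - reflexivity.
  - destruct (hnot_id b2 w2). intro x. symmetry. apply heq.
  - destruct (hnot_id b1 w1). apply heq.
  - simpl in heq. destruct b1, b2.
    + f_equal. apply IH. intro x. apply hinj1, heq.
    + destruct (hno_cross w1 w2 heq).
    + destruct (hno_cross w2 w1). intro x. symmetry. apply heq.
    + f_equal. apply IH. intro x. apply hinj2, heq.
Qed.

Lemma free_semigroup2_intro : free_semigroup2 a1 a2.
Proof.
  intros w1 w2 _ _ hneq heq. apply hneq, word_eval_ext_inj.
  intro x. rewrite heq. reflexivity.
Qed.

End Words.

Fixpoint suffixes {A : Type} (l : list A) : list (list A) :=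
  match l with nil => nil :: nil | _ :: t => l :: suffixes t end.

Lemma in_suffixes {A : Type} (l w : list A) : In w (suffixes l) <-> exists u, l = u ++ w.
Proof.
  induction l as [|a l IH]; simpl.
  - split.
    + intros [<-|[]]. exists nil. reflexivity.
    + intros [u hu]. left. destruct u; [|discriminate]. destruct w; [reflexivity|discriminate].
  - rewrite IH. split.
    + intros [<-|[u ->]]; [exists nil|exists (a :: u)]; reflexivity.
    + intros [[|b u] hu]; [left; exact hu|].
      injection hu as <- ->. right. exists u. reflexivity.
Qed.

Lemma suffixes_self {A : Type} (l : list A) : In l (suffixes l).
Proof. apply in_suffixes. exists nil. reflexivity. Qed.

Lemma suffixes_tail {A : Type} (l w : list A) (b : A) :
  In (b :: w) (suffixes l) -> In w (suffixes l).
Proof.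
  rewrite !in_suffixes. intros [u ->]. exists (u ++ b :: nil). rewrite <- app_assoc. reflexivity.
Qed.

Lemma exists_max_in_list {A : Type} (phi : A -> R) (l : list A) :
  l <> nil -> exists a, In a l /\ forall b, In b l -> phi b <= phi a.
Proof.
  induction l as [|a l IH]; intros hl; [contradiction|].
  destruct l as [|a' l'].
  - exists a. split; [left; reflexivity|]. intros b [<-|[]]. lra.
  - destruct (IH ltac:(discriminate)) as [m [hm hmax]].
    destruct (Rle_dec (phi a) (phi m)).
    + exists m. split; [right; exact hm|]. intros b [<-|hb]; auto.
    + exists a. split; [left; reflexivity|]. intros b [<-|hb]; [lra|].
      specialize (hmax b hb). lra.
Qed.

Definition ratio (c1 c2 : R) (b : bool) : R := if b then c1 else c2.

Section TwoContractions.

Context {X : Type} {d : X -> X -> R} {a1 a2 : X -> X} {c1 c2 : R}.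
Hypotheses (hd : is_metric d) (hc1 : 0 < c1) (hc2 : 0 < c2) (hsum : c1 + c2 <= 1)
  (hcon1 : contraction_with d c1 a1) (hcon2 : contraction_with d c2 a2).

Lemma ratio_gt0 b : 0 < ratio c1 c2 b.
Proof. destruct b; simpl; lra. Qed.

Lemma ratio_lt1 b : ratio c1 c2 b < 1.
Proof. destruct b; simpl; lra. Qed.

Lemma ratio_add_le1 b b' : b <> b' -> ratio c1 c2 b + ratio c1 c2 b' <= 1.
Proof. destruct b, b'; simpl; intros; lra || congruence. Qed.

Lemma letter_contraction b : contraction_with d (ratio c1 c2 b) (letter a1 a2 b).
Proof. destruct b; assumption. Qed.

Lemma word_eval_cons_contraction_le c b w :
  ratio c1 c2 b <= c -> contraction_with d 1 (word_eval a1 a2 w) ->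
  contraction_with d c (word_eval a1 a2 (b :: w)).
Proof.
  intros hc hw. apply (contraction_with_le hd (ratio c1 c2 b * 1)); [lra|].
  exact (contraction_comp (Rlt_le _ _ (ratio_gt0 b)) (letter_contraction b) hw).
Qed.

Lemma word_eval_nonexpansive w : contraction_with d 1 (word_eval a1 a2 w).
Proof.
  induction w as [|b w IH]; [intros x y; simpl; lra|].
  apply word_eval_cons_contraction_le; [apply Rlt_le, ratio_lt1|exact IH].
Qed.

Lemma word_eval_cons_contraction b w :
  contraction_with d (ratio c1 c2 b) (word_eval a1 a2 (b :: w)).
Proof. apply word_eval_cons_contraction_le; [lra|apply word_eval_nonexpansive]. Qed.

Section Crossing.

Variables (q : X) (f g : list bool).
Hypotheses (hf : a1 (word_eval a1 a2 f q) = q) (hg : a2 (word_eval a1 a2 g q) = q).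

Let words := suffixes f ++ suffixes g.
Let point (w : list bool) := word_eval a1 a2 w q.
Let points := map point words.
Let anchor (b : bool) := word_eval a1 a2 (if b then f else g) q.

Lemma words_tail b w : In (b :: w) words -> In w words.
Proof.
  unfold words. rewrite !in_app_iff. intros [h|h]; [left|right]; exact (suffixes_tail _ _ _ h).
Qed.

Lemma anchor_in_points b : In (anchor b) points.
Proof.
  apply (in_map point). unfold words. apply in_app_iff.
  destruct b; [left|right]; apply suffixes_self.
Qed.

Lemma q_in_points : In q points.
Proof.
  apply (in_map point _ nil).
  apply in_app_iff. left. apply in_suffixes. exists f. rewrite app_nil_r. reflexivity.
Qed.

Lemma letter_anchor b : letter a1 a2 b (anchor b) = q.
Proof. destruct b; assumption. Qed.

Lemma points_decompose y : In y points -> exists b Y, In Y points /\ y = letter a1 a2 b Y.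
Proof.
  unfold points. rewrite in_map_iff. intros [[|b w] [<- hw]].
  - exists true, (anchor true). split; [apply anchor_in_points|]. symmetry. apply letter_anchor.
  - exists b, (point w). split; [|reflexivity].
    apply (in_map point). exact (words_tail b w hw).
Qed.

Lemma crossing_dist_lt M : 0 < M ->
  (forall x y, In x points -> In y points -> d x y <= M) ->
  forall w, In w words -> forall y, In y points -> d (point w) y < M.
Proof.
  intros hM hbound w. induction w as [|b w IH]; intros hw y hy;
    destruct (points_decompose y hy) as (b' & Y & hY & ->).
  - change (point nil) with q. rewrite <- (letter_anchor b') at 1.
    eapply Rle_lt_trans; [apply letter_contraction|].
    pose proof (hbound _ _ (anchor_in_points b') hY).
    pose proof (ratio_lt1 b'). pose proof (ratio_gt0 b'). nra.
  - change (point (b :: w)) with (letter a1 a2 b (point w)).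
    assert (hZ : In (point w) points) by (apply (in_map point); exact (words_tail b w hw)).
    destruct (Bool.bool_dec b b') as [<-|hbb'].
    + eapply Rle_lt_trans; [apply letter_contraction|].
      pose proof (hbound _ _ hZ hY). pose proof (ratio_lt1 b). pose proof (ratio_gt0 b). nra.
    + pose proof (dist_triangle hd (letter a1 a2 b (point w)) q (letter a1 a2 b' Y)) as htri.
      rewrite <- (letter_anchor b) in htri at 1. rewrite <- (letter_anchor b') in htri.
      pose proof (letter_contraction b (point w) (anchor b)).
      pose proof (letter_contraction b' (anchor b') Y).
      pose proof (IH (words_tail b w hw) _ (anchor_in_points b)).
      pose proof (hbound _ _ (anchor_in_points b') hY).
      pose proof (ratio_gt0 b). pose proof (ratio_gt0 b'). pose proof (ratio_add_le1 b b' hbb').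
      nra.
Qed.

Lemma points_collapse x y : In x points -> In y points -> x = y.
Proof.
  assert (hne : list_prod points points <> nil).
  { pose proof q_in_points. destruct points; [contradiction|discriminate]. }
  destruct (exists_max_in_list (fun p => d (fst p) (snd p)) _ hne) as [[x0 y0] [h0 hmax]].
  apply in_prod_iff in h0 as [hx0 hy0]. simpl in hmax.
  assert (hbound : forall u v, In u points -> In v points -> d u v <= d x0 y0).
  { intros u v hu hv. apply (hmax (u, v)), in_prod_iff. split; assumption. }
  assert (hM : d x0 y0 <= 0).
  { apply Rnot_lt_le. intros hM.
    assert (hx0' := hx0). unfold points in hx0'. apply in_map_iff in hx0' as [w0 [<- hw0]].
    pose proof (crossing_dist_lt _ hM hbound w0 hw0 y0 hy0). lra. }
  intros hx hy. apply (dist_eq0 hd), Rle_antisym; [|apply (dist_ge0 hd)].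
  apply (Rle_trans _ _ _ (hbound x y hx hy) hM).
Qed.

Lemma crossing_point_fixed : a1 q = q /\ a2 q = q.
Proof.
  pose proof (points_collapse _ _ (anchor_in_points true) q_in_points) as h1.
  pose proof (points_collapse _ _ (anchor_in_points false) q_in_points) as h2.
  split; [rewrite <- h1 at 1; exact hf|rewrite <- h2 at 1; exact hg].
Qed.

End Crossing.

End TwoContractions.

Theorem proposition2p1 (X : Type) (d : X -> X -> R)
  (hmetric : is_metric d) (hcomplete : complete_metric d) (hne : inhabited X)
  (alpha1 alpha2 : X -> X) (c1 c2 : R)
  (hc1 : 0 < c1 < 1) (hc2 : 0 < c2 < 1)
  (hinj1 : injective_map alpha1) (hinj2 : injective_map alpha2)
  (hcon1 : contraction_with d c1 alpha1) (hcon2 : contraction_with d c2 alpha2)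
  (hfix : exists p1 p2 : X, alpha1 p1 = p1 /\ alpha2 p2 = p2 /\ p1 <> p2)
  (hsum : c1 + c2 <= 1) :
  free_semigroup2 alpha1 alpha2.
Proof.
  destruct hfix as (p1 & p2 & hp1 & hp2 & hp12).
  assert (hc1' : 0 < c1) by lra. assert (hc2' : 0 < c2) by lra.
  pose proof (word_eval_cons_contraction hmetric hc1' hc2' hsum hcon1 hcon2) as hword.
  apply free_semigroup2_intro; [exact hinj1|exact hinj2| |].
  - intros b w hid. apply hp12.
    apply (contraction_fixed_point_unique hmetric (ratio_lt1 hc1' hc2' hsum b) (hword b w));
      apply hid.
  - intros f g hcross.
    destruct (banach_fixed_point hmetric (conj (Rlt_le _ _ hc1') (proj2 hc1)) (hword true f)
                hcomplete hne) as [q hq].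
    destruct (crossing_point_fixed hmetric hc1' hc2' hsum hcon1 hcon2 q f g hq
                (eq_trans (eq_sym (hcross q)) hq)) as [hq1 hq2].
    apply hp12. transitivity q; [|symmetry].
    + exact (contraction_fixed_point_unique hmetric (proj2 hc1) hcon1 _ _ hp1 hq1).
    + exact (contraction_fixed_point_unique hmetric (proj2 hc2) hcon2 _ _ hp2 hq2).
Qed.
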